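(* Let $(\mathcal V,\mathcal W,\lambda)$ be a FTvN system where $\mathcal V$ is a Hilbert space, and let $C$ denote its center. Then: (a) $\mathcal V=C+C^\perp$. (b) $(C,\mathcal W,\lambda|_C)$ is a FTvN system whose center is $C$ (so any two elements in this system commute). (c) $(C^\perp,\mathcal W,\lambda|_{C^\perp})$ is a FTvN system whose center is $\{0\}$.
   Context: A Fan-Theobald-von Neumann (FTvN) system is a triple $(\mathcal V,\mathcal W,\lambda)$ where $\mathcal V,\mathcal W$ are real inner product spaces and $\lambda:\mathcal V\to\mathcal W$ is a map such that: (A1) $\|\lambda(x)\|=\|x\|$ for all $x$; (A2) $\langle x,y\rangle\le\langle\lambda(x),\lambda(y)\rangle$ for all $x,y$; (A3) for every $c\in\mathcal V$ and $q\in\lambda(\mathcal V)$ there exists $x$ with $\lambda(x)=q$ and $\langle c,x\rangle=\langle\lambda(c),\lambda(x)\rangle$. Elements $x,y$ commute if $\langle x,y\rangle=\langle\lambda(x),\lambda(y)\rangle$; the center of a FTvN system is the set of elements commuting with every element of the underlying space. Subspaces carry the restricted inner product. *)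

From mathcomp Require Import all_boot all_order all_algebra.
From mathcomp Require Import reals.
Set Implicit Arguments. Unset Strict Implicit. Unset Printing Implicit Defensive.
Import Order.TTheory GRing.Theory Num.Theory.
Local Open Scope ring_scope.

Section FTvN.
Variable R : realType.

Definition is_inner_product (V : lmodType R) (ip : V -> V -> R) : Prop :=
  [/\ (forall x y, ip x y = ip y x),
      (forall a x y z, ip (a *: x + y) z = a * ip x z + ip y z),
      (forall x, 0 <= ip x x) &
      (forall x, ip x x = 0 -> x = 0)].

Definition ipnorm (V : lmodType R) (ip : V -> V -> R) (x : V) : R :=
  Num.sqrt (ip x x).

Definition ip_complete (V : lmodType R) (ip : V -> V -> R) : Prop :=
  forall u : nat -> V,
    (forall e : R, 0 < e -> exists N, forall m n, (N <= m)%N -> (N <= n)%N ->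
        ipnorm ip (u m - u n) < e) ->
    exists l : V, forall e : R, 0 < e -> exists N, forall n, (N <= n)%N ->
        ipnorm ip (u n - l) < e.

Definition is_hilbert (V : lmodType R) (ip : V -> V -> R) : Prop :=
  is_inner_product ip /\ ip_complete ip.

Definition is_subspace (V : lmodType R) (S : V -> Prop) : Prop :=
  [/\ S 0, (forall x y, S x -> S y -> S (x + y)) &
      (forall a x, S x -> S (a *: x))].

(* Axioms (A1)-(A3) for the triple (S, W, lam|_S), S carrying the
   restricted inner product. *)
Definition FTvN_axioms (V W : lmodType R) (ipV : V -> V -> R) (ipW : W -> W -> R)
    (lam : V -> W) (S : V -> Prop) : Prop :=
  [/\ (forall x, S x -> ipnorm ipW (lam x) = ipnorm ipV x),
      (forall x y, S x -> S y -> ipV x y <= ipW (lam x) (lam y)) &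
      (forall c y, S c -> S y ->
          exists x, [/\ S x, lam x = lam y & ipV c x = ipW (lam c) (lam x)])].

Definition FTvN_system (V W : lmodType R) (ipV : V -> V -> R) (ipW : W -> W -> R)
    (lam : V -> W) : Prop :=
  [/\ is_inner_product ipV, is_inner_product ipW &
      FTvN_axioms ipV ipW lam (fun _ => True)].

Definition FTvN_subsystem (V W : lmodType R) (ipV : V -> V -> R) (ipW : W -> W -> R)
    (lam : V -> W) (S : V -> Prop) : Prop :=
  [/\ is_inner_product ipV, is_inner_product ipW, is_subspace S &
      FTvN_axioms ipV ipW lam S].

Definition commute_ftvn (V W : lmodType R) (ipV : V -> V -> R) (ipW : W -> W -> R)
    (lam : V -> W) (x y : V) : Prop :=
  ipV x y = ipW (lam x) (lam y).

Definition center_on (V W : lmodType R) (ipV : V -> V -> R) (ipW : W -> W -> R)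
    (lam : V -> W) (S : V -> Prop) (x : V) : Prop :=
  S x /\ forall y, S y -> commute_ftvn ipV ipW lam x y.

Definition center (V W : lmodType R) (ipV : V -> V -> R) (ipW : W -> W -> R)
    (lam : V -> W) : V -> Prop :=
  center_on ipV ipW lam (fun _ => True).

Definition orth (V : lmodType R) (ip : V -> V -> R) (S : V -> Prop) (x : V) : Prop :=
  forall c, S c -> ip x c = 0.

End FTvN.

From mathcomp Require Import all_boot all_order all_algebra.
From mathcomp Require Import reals classical_sets lra.
From Stdlib Require Import ClassicalEpsilon.
Import Order.TTheory GRing.Theory Num.Theory.
Local Open Scope ring_scope.

(* The center C is a closed subspace of V: if x and y commute, then (A1)
   and (A2) force lam (x + y) = lam x + lam y (and likewise lam (a x) = a lam x
   for central x), and lam is nonexpansive, so commuting with a fixed y passes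
   to limits.  In a Hilbert space every vector v then has a nearest point c in
   C, and v - c is orthogonal to C; this gives (a).  Part (b) is immediate since
   central elements commute with everything.  For (c), lam x = lam y forces
   <x, z> = <y, z> for every central z, so the element provided by (A3) stays
   in the orthogonal complement of C; and an element of that complement which
   commutes with the whole complement commutes, by (a), with all of V, hence
   lies in C, whose intersection with its complement is {0}. *)

Set Implicit Arguments. Unset Strict Implicit.

Section InnerProductAlgebra.
Variables (R : realType) (V : lmodType R) (ip : V -> V -> R).
Hypothesis ipI : is_inner_product ip.

Lemma ipC x y : ip x y = ip y x.
Proof. by case: ipI => h _ _ _; apply: h. Qed.

Lemma ipxx_ge0 x : 0 <= ip x x.
Proof. by case: ipI => _ _ h _; apply: h. Qed.

Lemma ipxx_eq0 x : ip x x = 0 -> x = 0.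
Proof. by case: ipI => _ _ _; apply. Qed.

Lemma ipDl x y z : ip (x + y) z = ip x z + ip y z.
Proof. by case: ipI => _ h _ _; rewrite -{1}[x]scale1r h mul1r. Qed.

Lemma ip0l z : ip 0 z = 0.
Proof. by apply: (addrI (ip 0 z)); rewrite -ipDl !addr0. Qed.

Lemma ipZl a x z : ip (a *: x) z = a * ip x z.
Proof. by case: ipI => _ h _ _; rewrite -[a *: x]addr0 h ip0l addr0. Qed.

Lemma ipNl x z : ip (- x) z = - ip x z.
Proof. by rewrite -scaleN1r ipZl mulN1r. Qed.

Lemma ipDr x y z : ip z (x + y) = ip z x + ip z y.
Proof. by rewrite ipC ipDl !(ipC z). Qed.

Lemma ipZr a x z : ip z (a *: x) = a * ip z x.
Proof. by rewrite ipC ipZl (ipC z). Qed.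

Lemma ipNr x z : ip z (- x) = - ip z x.
Proof. by rewrite ipC ipNl (ipC z). Qed.

End InnerProductAlgebra.

Ltac ip_expand ipI :=
  rewrite ?(ipDl ipI, ipDr ipI, ipNl ipI, ipNr ipI, ipZl ipI, ipZr ipI).

Section InnerProductNorm.
Variables (R : realType) (V : lmodType R) (ip : V -> V -> R).
Hypothesis ipI : is_inner_product ip.
Local Notation N := (ipnorm ip).

Lemma ipnorm_ge0 x : 0 <= N x.
Proof. exact: sqrtr_ge0. Qed.

Lemma ipnorm_sqr x : N x ^+ 2 = ip x x.
Proof. by rewrite sqr_sqrtr // ipxx_ge0. Qed.

Lemma ipnorm_le x y : (N x <= N y) = (ip x x <= ip y y).
Proof. by rewrite ler_sqrt // ipxx_ge0. Qed.

Lemma ipnorm_lt x e : 0 < e -> (N x < e) = (ip x x < e ^+ 2).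
Proof.
by move=> e0; rewrite -{1}(gtr0_norm e0) -sqrtr_sqr ltr_sqrt ?exprn_gt0.
Qed.

Lemma ipnormN x : N (- x) = N x.
Proof. by rewrite /ipnorm ipNl // ipNr // opprK. Qed.

Lemma ip_le_ipnorm x y : ip x y <= N x * N y.
Proof.
have CS : ip x y ^+ 2 <= ip x x * ip y y.
  have [xx0|xx_neq0] := eqVneq (ip x x) 0.
    by rewrite xx0 mul0r (ipxx_eq0 ipI xx0) ip0l // expr0n.
  have xx_gt0 : 0 < ip x x by rewrite lt_neqAle eq_sym xx_neq0 ipxx_ge0.
  (* 0 <= ip (t x + y) (t x + y) at the minimising t *)
  set t := - ip x y / ip x x.
  have ht : t * ip x x = - ip x y by rewrite mulfVK.
  have := ipxx_ge0 ipI (t *: x + y); ip_expand ipI; rewrite (ipC ipI y x).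
  have := ipxx_ge0 ipI y; nra.
apply: le_trans (ler_norm _) _.
by rewrite -sqrtr_sqr /ipnorm -sqrtrM ?ipxx_ge0 // ler_sqrt // mulr_ge0 ?ipxx_ge0.
Qed.

Lemma ipnormD_le x y : N (x + y) <= N x + N y.
Proof.
rewrite -ler_sqr ?nnegrE ?addr_ge0 ?ipnorm_ge0 // sqrrD !ipnorm_sqr.
ip_expand ipI; rewrite (ipC ipI y x); have := ip_le_ipnorm x y; lra.
Qed.

Lemma orth_subspace S : is_subspace (orth ip S).
Proof.
split=> [c _|x y ox oy c Sc|a x ox c Sc]; first exact: ip0l.
  by rewrite ipDl // ox // oy // addr0.
by rewrite ipZl // ox // mulr0.
Qed.

Lemma orth_of_line_min w c :
  (forall t, ip w w <= ip (w - t *: c) (w - t *: c)) -> ip w c = 0.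
Proof.
move=> wmin; set a := ip c c; set b := ip w c.
have a_ge0 : 0 <= a by exact: ipxx_ge0.
set t := b / (a + 1).
have ht : t * (a + 1) = b by rewrite divfK // gt_eqF //; lra.
have t2_ge0 : 0 <= t ^+ 2 := sqr_ge0 t.
have := wmin t; ip_expand ipI; rewrite (ipC ipI c w) -/a -/b => le_tb.
have t2_le0 : t ^+ 2 <= 0 by nra.
have t0 : t = 0 by apply/eqP; rewrite -sqrf_eq0 eq_le t2_le0 t2_ge0.
by rewrite -ht t0 mul0r.
Qed.

End InnerProductNorm.

Lemma eventually_inv_lt (R : realType) (e : R) :
  0 < e -> exists k, forall n, (k <= n)%N -> n.+1%:R^-1 < e.
Proof.
move=> e0; have [k] := ltr_add_invr e0; rewrite add0r => hk.
exists k => n kn; apply: le_lt_trans hk.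
by rewrite lef_pV2 ?posrE ?ltr0Sn // ler_nat ltnS.
Qed.

Definition ip_closed (R : realType) (V : lmodType R) (ip : V -> V -> R)
    (S : V -> Prop) : Prop :=
  forall l, (forall e, 0 < e -> exists c, S c /\ ipnorm ip (c - l) < e) -> S l.

Section MinimizingSequence.
Variables (R : realType) (V : lmodType R) (ip : V -> V -> R).
Hypotheses (ipI : is_inner_product ip) (ip_compl : ip_complete ip).
Variable S : V -> Prop.
Hypotheses (S_sub : is_subspace S) (S_closed : ip_closed ip S).
Variables (v : V) (d : R) (cs : nat -> V).
Hypotheses (d_ge0 : 0 <= d) (d_lb : forall c, S c -> d <= ipnorm ip (v - c)).
Hypotheses (cs_S : forall n, S (cs n))
  (cs_near : forall n, ipnorm ip (v - cs n) < d + n.+1%:R^-1).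
Local Notation N := (ipnorm ip).

Let inv_le1 n : 0 < (n.+1%:R^-1 : R) <= 1.
Proof. by rewrite invr_gt0 ltr0Sn invf_le1 ?ltr0Sn // ler1n. Qed.

Let cs_near_sqr n : ip (v - cs n) (v - cs n) <= (d + n.+1%:R^-1) ^+ 2.
Proof.
rewrite -(ipnorm_sqr ipI) lerXn2r ?nnegrE ?ipnorm_ge0 ?(ltW (cs_near n)) //.
by rewrite addr_ge0 ?invr_ge0.
Qed.

Lemma minimizing_seq_dist n m :
  ip (cs n - cs m) (cs n - cs m) <= (4 * d + 2) * (n.+1%:R^-1 + m.+1%:R^-1).
Proof.
pose mid := 2^-1 *: (cs n + cs m).
have [_ S_add S_scale] := S_sub.
have d_le_mid : d ^+ 2 <= ip (v - mid) (v - mid).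
  rewrite -(ipnorm_sqr ipI) lerXn2r ?nnegrE ?ipnorm_ge0 //.
  exact/d_lb/S_scale/S_add.
(* the parallelogram law for v - cs n and v - cs m *)
have -> : ip (cs n - cs m) (cs n - cs m) = 2 * ip (v - cs n) (v - cs n)
    + 2 * ip (v - cs m) (v - cs m) - 4 * ip (v - mid) (v - mid).
  rewrite /mid; ip_expand ipI.
  rewrite (ipC ipI (cs m) (cs n)) (ipC ipI (cs n) v) (ipC ipI (cs m) v); lra.
move: (cs_near_sqr n) (cs_near_sqr m) (inv_le1 n) (inv_le1 m).
set a := n.+1%:R^-1; set b := m.+1%:R^-1.
move=> near_n near_m /andP[a_gt0 a_le1] /andP[b_gt0 b_le1].
have a2_le : a ^+ 2 <= a by nra.
have b2_le : b ^+ 2 <= b by nra.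
have := d_ge0; lra.
Qed.

Lemma minimizing_seq_cauchy (e : R) : 0 < e ->
  exists k, forall m n, (k <= m)%N -> (k <= n)%N -> N (cs m - cs n) < e.
Proof.
move=> e0; have d42_gt0 : 0 < 4 * d + 2 by have := d_ge0; lra.
pose x := e ^+ 2 / (4 * d + 2) / 2.
have x_gt0 : 0 < x by rewrite !divr_gt0 ?exprn_gt0.
have hx : (4 * d + 2) * (x * 2) = e ^+ 2.
  by rewrite /x divfK ?pnatr_eq0 // mulrC divfK // gt_eqF.
clearbody x; have [k hk] := eventually_inv_lt x_gt0.
exists k => m n km kn; rewrite (ipnorm_lt _ _ e0).
apply: le_lt_trans (minimizing_seq_dist m n) _.
rewrite -hx ltr_pM2l //.
by move: (hk m km) (hk n kn); set a := m.+1%:R^-1; set b := n.+1%:R^-1; lra.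
Qed.

Lemma minimizing_seq_limit : exists l, S l /\ N (v - l) <= d.
Proof.
have [l hl] := ip_compl minimizing_seq_cauchy.
exists l; split.
  by apply: S_closed => e /hl[k hk]; exists (cs k); split; last exact: hk.
apply/ler_addgt0Pr => e e0.
have e2_gt0 : 0 < e / 2 by rewrite divr_gt0.
have [k1 hk1] := hl _ e2_gt0; have [k2 hk2] := eventually_inv_lt e2_gt0.
pose n := maxn k1 k2.
have := ipnormD_le ipI (v - cs n) (cs n - l); rewrite addrA subrK.
have := hk1 n (leq_maxl _ _); have := hk2 n (leq_maxr _ _); have := cs_near n.
set a := n.+1%:R^-1; lra.
Qed.

End MinimizingSequence.

Lemma best_approximation (R : realType) (V : lmodType R) (ip : V -> V -> R)
    (S : V -> Prop) : is_hilbert ip -> is_subspace S -> ip_closed ip S ->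
  forall v, exists l, S l /\
    forall c, S c -> ip (v - l) (v - l) <= ip (v - c) (v - c).
Proof.
move=> [ipI ip_compl] S_sub S_closed v.
pose dists r := exists c, S c /\ r = ipnorm ip (v - c).
have [S0 _ _] := S_sub.
have dists_inf : has_inf dists.
  split; first by exists (ipnorm ip (v - 0)), 0.
  by exists 0 => _ [c [_ ->]]; exact: ipnorm_ge0.
have d_lb c : S c -> inf dists <= ipnorm ip (v - c).
  by move=> Sc; apply: (ge_inf dists_inf.2); exists c.
have d_ge0 : 0 <= inf dists.
  by apply: lb_le_inf dists_inf.1 _ => _ [c [_ ->]]; exact: ipnorm_ge0.
have near n : exists c, S c /\ ipnorm ip (v - c) < inf dists + n.+1%:R^-1.
  have inv_gt0 : 0 < (n.+1%:R^-1 : R) by rewrite invr_gt0 ltr0Sn.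
  by have [_ [c [Sc ->]] lt] := inf_adherent inv_gt0 dists_inf; exists c.
have [cs cs_spec] := choice _ near.
have [l [Sl vl_le]] := minimizing_seq_limit ipI ip_compl S_sub S_closed d_ge0 d_lb
  (fun n => (cs_spec n).1) (fun n => (cs_spec n).2).
exists l; split=> // c Sc.
by rewrite -(ipnorm_le ipI); apply: le_trans vl_le (d_lb c Sc).
Qed.

Lemma orth_decomposition (R : realType) (V : lmodType R) (ip : V -> V -> R)
    (S : V -> Prop) : is_hilbert ip -> is_subspace S -> ip_closed ip S ->
  forall v, exists c d, [/\ S c, orth ip S d & v = c + d].
Proof.
move=> hilb S_sub S_closed v; have [ipI _] := hilb.
have [_ S_add S_scale] := S_sub.
have [l [Sl l_min]] := best_approximation hilb S_sub S_closed v.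
exists l, (v - l); split=> //; last by rewrite addrC subrK.
move=> c Sc; apply: (orth_of_line_min ipI) => t.
by rewrite -addrA -opprD; apply/l_min/S_add/S_scale.
Qed.

Section FTvNSystem.
Variables (R : realType) (V W : lmodType R).
Variables (p : V -> V -> R) (q : W -> W -> R) (lam : V -> W).
Hypothesis ftvn : FTvN_system p q lam.
Local Notation C := (center p q lam).
Local Notation commute := (commute_ftvn p q lam).

Let pI : is_inner_product p. Proof. by case: ftvn. Qed.
Let qI : is_inner_product q. Proof. by case: ftvn. Qed.

Let lam_norm x : ipnorm q (lam x) = ipnorm p x.
Proof. by case: ftvn => _ _ [A1 _ _]; apply: A1. Qed.

Let lam_ip_ge x y : p x y <= q (lam x) (lam y).
Proof. by case: ftvn => _ _ [_ A2 _]; apply: A2. Qed.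

Let lam_attains c y : exists x, lam x = lam y /\ commute c x.
Proof. by case: ftvn => _ _ [_ _ A3]; have [x [_ ? ?]] := A3 c y I I; exists x. Qed.

Lemma centerP x : C x <-> forall y, commute x y.
Proof. by split=> [[_ h] y|h]; [exact: h | split=> // y _; exact: h]. Qed.

Lemma lam_sqr x : q (lam x) (lam x) = p x x.
Proof. by rewrite -(ipnorm_sqr qI) -(ipnorm_sqr pI) lam_norm. Qed.

Lemma lam0 : lam 0 = 0.
Proof. by apply: (ipxx_eq0 qI); rewrite lam_sqr (ip0l pI). Qed.

Lemma lam_nonexpansive x y : ipnorm q (lam x - lam y) <= ipnorm p (x - y).
Proof.
rewrite /ipnorm ler_sqrt ?ipxx_ge0 //; ip_expand qI; ip_expand pI.
by rewrite !lam_sqr (ipC pI y x) (ipC qI (lam y)); have := lam_ip_ge x y; lra.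
Qed.

Lemma lamD_commute x y : commute x y -> lam (x + y) = lam x + lam y.
Proof.
rewrite /commute_ftvn => xy; apply/eqP; rewrite -subr_eq0; apply/eqP.
apply: (ipxx_eq0 qI); apply/eqP; rewrite eq_le ipxx_ge0 // andbT.
have := lam_sqr (x + y); have := lam_ip_ge (x + y) x; have := lam_ip_ge (x + y) y.
ip_expand qI; ip_expand pI.
rewrite !lam_sqr !(ipC qI (lam x) (lam (x + y))) !(ipC qI (lam y) (lam (x + y))).
by rewrite (ipC qI (lam y) (lam x)) (ipC pI y x); lra.
Qed.

Lemma lamZ_commute x a : commute x (a *: x) -> lam (a *: x) = a *: lam x.
Proof.
rewrite /commute_ftvn => xax; apply/eqP; rewrite -subr_eq0; apply/eqP.
apply: (ipxx_eq0 qI); move: xax; ip_expand qI; ip_expand pI.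
rewrite !lam_sqr (ipC qI (lam x) (lam (a *: x))) => <-.
by ip_expand pI; lra.
Qed.

Lemma center_subspace : is_subspace C.
Proof.
split=> [|x y /centerP Cx /centerP Cy|a x /centerP Cx]; apply/centerP => z.
- by rewrite /commute_ftvn lam0 (ip0l pI) (ip0l qI).
- by rewrite /commute_ftvn lamD_commute // (ipDl pI) (ipDl qI) Cx Cy.
- by rewrite /commute_ftvn lamZ_commute // (ipZl pI) (ipZl qI) Cx.
Qed.

Lemma center_closed : ip_closed p C.
Proof.
move=> l l_lim; apply/centerP => y; apply/eqP; rewrite eq_le lam_ip_ge andTb.
set Y := ipnorm p y; have Y_ge0 : 0 <= Y := ipnorm_ge0 p y.
(* the gap q (lam x) (lam y) - p x y is nonnegative, vanishes at central x
   and is 2 Y-Lipschitz in x *)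
have gap_le c : C c ->
    q (lam l) (lam y) - p l y <= 2 * Y * ipnorm p (c - l).
  move=> /centerP Cc.
  have lam_split : lam l = lam c + (lam l - lam c) by rewrite addrC subrK.
  have l_split : l = c - (c - l) by rewrite opprB addrC subrK.
  rewrite [in q _ _]lam_split [in p _ _]l_split (ipDl qI) (ipDl pI) (ipNl pI).
  have := ip_le_ipnorm qI (lam l - lam c) (lam y).
  have := ip_le_ipnorm pI (c - l) y.
  have := lam_nonexpansive l c; rewrite -(ipnormN pI) opprB lam_norm -/Y.
  have := Cc y; rewrite /commute_ftvn.
  have := ipnorm_ge0 q (lam l - lam c); have := ipnorm_ge0 p (c - l); nra.
apply/ler_addgt0Pr => e e_gt0.
pose e' := e / (2 * Y + 1).
have e'_gt0 : 0 < e' by rewrite divr_gt0 //; lra.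
have he' : e' * (2 * Y + 1) = e by rewrite divfK // gt_eqF //; lra.
have [c [Cc cl_lt]] := l_lim _ e'_gt0.
by have := gap_le c Cc; have := ipnorm_ge0 p (c - l); clearbody e'; nra.
Qed.

Lemma center_ip_lam x z : C z -> p x z = q (lam x) (lam z).
Proof. by move=> /centerP Cz; rewrite ipC // Cz ipC. Qed.

Lemma center_decomposition : is_hilbert p ->
  forall v, exists c d, [/\ C c, orth p C d & v = c + d].
Proof.
by move=> hilb; apply: orth_decomposition hilb center_subspace center_closed.
Qed.

Lemma center_subsystem : FTvN_subsystem p q lam C.
Proof.
split=> //; first exact: center_subspace.
split=> [x _|x y _ _|c y /centerP Cc Cy]; [exact: lam_norm|exact: lam_ip_ge|].
by exists y; split=> //; apply: Cc.
Qed.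

Lemma center_on_centerE x : center_on p q lam C x <-> C x.
Proof. by split=> [[]//|/centerP Cx]; split=> // y _; apply: Cx. Qed.

Lemma orth_center_subsystem : FTvN_subsystem p q lam (orth p C).
Proof.
split=> //; first exact: orth_subspace.
split=> [x _|x y _ _|c y _ oy]; [exact: lam_norm|exact: lam_ip_ge|].
have [x [lxy cx]] := lam_attains c y.
exists x; split=> // z Cz.
by rewrite center_ip_lam // lxy -center_ip_lam // oy.
Qed.

Lemma center_on_orth_centerE x : is_hilbert p ->
  center_on p q lam (orth p C) x <-> x = 0.
Proof.
move=> hilb; split=> [[ox x_comm]|->]; last first.
  by split=> [c _|y _]; rewrite ?/commute_ftvn ?lam0 ?(ip0l pI) ?(ip0l qI).
suff Cx : C x by apply: (ipxx_eq0 pI); apply: ox.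
apply/centerP => v; have [c [d [/centerP Cc od ->]]] := center_decomposition hilb v.
rewrite /commute_ftvn lamD_commute; last exact: Cc.
have xc0 : p x c = 0 by apply: ox; apply/centerP.
rewrite (ipDr pI) (ipDr qI) -(x_comm d od) xc0.
by rewrite (ipC qI) -Cc (ipC pI c x) xc0.
Qed.

End FTvNSystem.

Theorem theorem6p6 (R : realType) (V W : lmodType R)
    (ipV : V -> V -> R) (ipW : W -> W -> R) (lam : V -> W) :
  FTvN_system ipV ipW lam ->
  is_hilbert ipV ->
  let C := center ipV ipW lam in
  [/\ (forall v : V, exists c d, [/\ C c, orth ipV C d & v = c + d]),
      FTvN_subsystem ipV ipW lam C /\
        (forall x, center_on ipV ipW lam C x <-> C x) &
      FTvN_subsystem ipV ipW lam (orth ipV C) /\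
        (forall x, center_on ipV ipW lam (orth ipV C) x <-> x = 0)].
Proof.
move=> ftvn hilb C; split.
- exact: center_decomposition ftvn hilb.
- by split; [exact: center_subsystem | exact: center_on_centerE].
- split; first exact: orth_center_subsystem.
  by move=> x; apply: center_on_orth_centerE.
Qed.
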